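(* Let $p,N\in\mathbb{N}$, $x_0<\cdots<x_N$, data $y_{n,2k}\in\mathbb{R}$ ($n=0,\dots,N$, $k=0,\dots,p$), and $\alpha\in\Theta_{2p}$. Let $\ell_\alpha$ be the Lidstone FIF and $\phi$ the classical Lidstone interpolation function for this data. Then for $k=1,\dots,p$, $$\|\ell_\alpha^{(2k)}-\phi^{(2k)}\|_\infty\le\frac{|\alpha|_\infty}{\mu^{2k}-|\alpha|_\infty}\big(\|\phi^{(2k)}\|_\infty+M_{2k,2p}\big),$$ where $\mu=\min_{1\le n\le N}a_n$ and $M_{2k,2p}=\frac{2\rho\pi}{3}\sum_{l=0}^{p-k}\big(\frac{x_N-x_0}{\pi}\big)^{2l}$.
   Context: Lidstone polynomials $\Lambda_l$: $\Lambda_0(x)=x$, $\Lambda_l''=\Lambda_{l-1}$, $\Lambda_l(0)=\Lambda_l(1)=0$ for $l\ge1$. $a_n=\frac{x_n-x_{n-1}}{x_N-x_0}$, $L_n(x)=a_nx+\frac{x_Nx_{n-1}-x_0x_n}{x_N-x_0}$. $\Theta_{2p}=\{\alpha\in\mathbb{R}^N:|\alpha_n|<a_n^{2p}\ \forall n\}$. For $\alpha\in\Theta_{2p}$, the Lidstone FIF $\ell_\alpha$ is the unique $C^{2p}[x_0,x_N]$ function satisfying $\ell_\alpha(L_n(x))=\alpha_n\ell_\alpha(x)+q_n(x)$ for $x\in[x_0,x_N]$, $n=1,\dots,N$, where $q_n(x)=\sum_{l=0}^p[(a_n^{2l}y_{n-1,2l}-\alpha_ny_{0,2l})\Lambda_l(\frac{x_N-x}{x_N-x_0})+(a_n^{2l}y_{n,2l}-\alpha_ny_{N,2l})\Lambda_l(\frac{x-x_0}{x_N-x_0})](x_N-x_0)^{2l}$;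 it satisfies $\ell_\alpha^{(2k)}(x_n)=y_{n,2k}$. The classical Lidstone interpolation function $\phi$ is defined on each $[x_{n-1},x_n]$, with $h_n=x_n-x_{n-1}$, by $\phi(x)=\sum_{l=0}^p\big[y_{n-1,2l}\Lambda_l(\frac{x_n-x}{h_n})+y_{n,2l}\Lambda_l(\frac{x-x_{n-1}}{h_n})\big]h_n^{2l}$ (it equals $\ell_0$). Notation: $|\alpha|_\infty=\max_n|\alpha_n|$, $\|f\|_\infty=\sup_{[x_0,x_N]}|f|$, $\rho=\max_{0\le k\le p}\max\{|y_{0,2k}|,|y_{N,2k}|\}$. *)

From Stdlib Require Import Reals Lra Lia.
Open Scope R_scope.

(* Lidstone polynomials: Lambda_0(x) = x, Lambda_l'' = Lambda_{l-1} on R,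
   Lambda_l(0) = Lambda_l(1) = 0 for l >= 1.  These conditions determine the
   family uniquely. *)
Definition has_second_deriv (f g : R -> R) : Prop :=
  exists f' : R -> R, forall x,
    derivable_pt_lim f x (f' x) /\ derivable_pt_lim f' x (g x).

Definition Lidstone_family (Lam : nat -> R -> R) : Prop :=
  (forall x, Lam 0%nat x = x) /\
  (forall l : nat, has_second_deriv (Lam (S l)) (Lam l)
                   /\ Lam (S l) 0 = 0 /\ Lam (S l) 1 = 0).

(* D is the family of successive derivatives of f on [a,b], up to order m,
   with D m continuous: i.e. f is C^m[a,b] and D j = f^(j) on [a,b].
   (Values of D j outside [a,b] are irrelevant; at the endpoints this gives
   the one-sided derivatives of f restricted to [a,b].) *)
Definition deriv_family (f : R -> R) (D : nat -> R -> R) (m : nat) (a b : R)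
  : Prop :=
  (forall x, a <= x <= b -> D 0%nat x = f x) /\
  (forall (j : nat) x, (j < m)%nat -> a <= x <= b ->
     derivable_pt_lim (D j) x (D (S j) x)) /\
  (forall x, a <= x <= b -> continuity_pt (D m) x).

Fixpoint max_upto (f : nat -> R) (n : nat) : R :=
  match n with
  | O => f 0%nat
  | S n' => Rmax (max_upto f n') (f (S n'))
  end.

Fixpoint min_upto (f : nat -> R) (n : nat) : R :=
  match n with
  | O => f 0%nat
  | S n' => Rmin (min_upto f n') (f (S n'))
  end.

(* Data: nodes xs 0 < ... < xs N; y n k stands for y_{n,2k}. *)

Definition a_coef (xs : nat -> R) (N n : nat) : R :=
  (xs n - xs (n - 1)%nat) / (xs N - xs 0%nat).

Definition L_map (xs : nat -> R) (N n : nat) (x : R) : R :=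
  a_coef xs N n * x + (xs N * xs (n - 1)%nat - xs 0%nat * xs n) / (xs N - xs 0%nat).

Definition q_fun (Lam : nat -> R -> R) (xs : nat -> R) (y : nat -> nat -> R)
  (alpha : nat -> R) (N p n : nat) (x : R) : R :=
  sum_f_R0 (fun l =>
    ((a_coef xs N n ^ (2 * l) * y (n - 1)%nat l - alpha n * y 0%nat l)
        * Lam l ((xs N - x) / (xs N - xs 0%nat))
     + (a_coef xs N n ^ (2 * l) * y n l - alpha n * y N l)
        * Lam l ((x - xs 0%nat) / (xs N - xs 0%nat)))
    * (xs N - xs 0%nat) ^ (2 * l)) p.

(* Classical Lidstone interpolant on the piece [x_{n-1}, x_n]. *)
Definition phi_piece (Lam : nat -> R -> R) (xs : nat -> R) (y : nat -> nat -> R)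
  (p n : nat) (x : R) : R :=
  let h := xs n - xs (n - 1)%nat in
  sum_f_R0 (fun l =>
    (y (n - 1)%nat l * Lam l ((xs n - x) / h)
     + y n l * Lam l ((x - xs (n - 1)%nat) / h)) * h ^ (2 * l)) p.

Definition in_Theta (xs : nat -> R) (N p : nat) (alpha : nat -> R) : Prop :=
  forall n : nat, (1 <= n <= N)%nat -> Rabs (alpha n) < a_coef xs N n ^ (2 * p).

Definition alpha_sup (N : nat) (alpha : nat -> R) : R :=
  max_upto (fun i => Rabs (alpha (S i))) (N - 1)%nat.

Definition mu_min (xs : nat -> R) (N : nat) : R :=
  min_upto (fun i => a_coef xs N (S i)) (N - 1)%nat.

Definition rho_max (y : nat -> nat -> R) (N p : nat) : R :=
  max_upto (fun k => Rmax (Rabs (y 0%nat k)) (Rabs (y N k))) p.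

Definition M_const (xs : nat -> R) (y : nat -> nat -> R) (N p k : nat) : R :=
  2 * rho_max y N p * PI / 3
  * sum_f_R0 (fun l => ((xs N - xs 0%nat) / PI) ^ (2 * l)) (p - k).

(* Differentiating the functional equation ell (L_n x) = alpha_n ell x + q_n x
   2k times gives a_n^{2k} ell^{(2k)} (L_n x) = alpha_n ell^{(2k)} x + q_n^{(2k)} x,
   and q_n^{(2k)} = a_n^{2k} phi^{(2k)} o L_n - alpha_n R_k, where R_k is the
   2k-th derivative of the Lidstone interpolant of the end data on [x_0, x_N].
   At a point where E = |ell^{(2k)} - phi^{(2k)}| is maximal this yields
   mu^{2k} E <= |alpha|_inf (E + ||phi^{(2k)}|| + ||R_k||), and ||R_k|| <= M_{2k,2p}
   follows from |Lam_{j+1} t| <= sin (pi t) / (3 pi^{2j+1}), a consequence of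
   the maximum principle for Lam_{j+1}'' = Lam_j. *)

From Stdlib Require Import Reals Lra Lia Psatz FunctionalExtensionality.
From Coquelicot Require Import Coquelicot.
Open Scope R_scope.

Definition second_deriv_on (a b : R) (f g : R -> R) : Prop :=
  exists f' : R -> R, forall x, a <= x <= b ->
    derivable_pt_lim f x (f' x) /\ derivable_pt_lim f' x (g x).

Lemma derivable_pt_lim_vanishing (f : R -> R) (a b x l : R) :
  a < b -> (forall t, a <= t <= b -> f t = 0) -> a <= x <= b ->
  derivable_pt_lim f x l -> l = 0.
Proof.
  intros Hab Hf Hx Hd.
  destruct (Req_dec l 0) as [|Hl]; [assumption | exfalso].
  destruct (Hd (Rabs l) (Rabs_pos_lt l Hl)) as [del Hdel].
  pose proof (cond_pos del).
  pose proof (Rmin_l (del / 2) ((b - a) / 2)). pose proof (Rmin_r (del / 2) ((b - a) / 2)).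
  pose proof (Rmin_glb_lt (del / 2) ((b - a) / 2) 0 ltac:(lra) ltac:(lra)).
  set (m := Rmin (del / 2) ((b - a) / 2)) in *.
  (* Step towards the interior of [a, b]: the difference quotient there is 0. *)
  set (s := if Rle_dec x ((a + b) / 2) then m else - m).
  assert (Hs : s <> 0 /\ Rabs s < del /\ a <= x + s <= b).
  { unfold s; destruct Rle_dec.
    - rewrite Rabs_right; lra.
    - rewrite Rabs_left; lra. }
  destruct Hs as (Hs0 & Hsd & Hsx).
  specialize (Hdel s Hs0 Hsd).
  rewrite (Hf (x + s) Hsx), (Hf x Hx) in Hdel.
  replace ((0 - 0) / s - l) with (- l) in Hdel by (field; exact Hs0).
  rewrite Rabs_Ropp in Hdel. lra.
Qed.

Lemma second_deriv_on_vanishing a b f g : a < b -> second_deriv_on a b f g ->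
  (forall x, a <= x <= b -> f x = 0) -> forall x, a <= x <= b -> g x = 0.
Proof.
  intros Hab [f' Hf'] Hf x Hx.
  assert (Hf'0 : forall t, a <= t <= b -> f' t = 0).
  { intros t Ht. apply (derivable_pt_lim_vanishing f a b t); auto. apply Hf'; auto. }
  apply (derivable_pt_lim_vanishing f' a b x); auto. apply Hf'; auto.
Qed.

Lemma second_deriv_on_chain_vanishing a b (F : nat -> R -> R) K : a < b ->
  (forall x, a <= x <= b -> F 0%nat x = 0) ->
  (forall i, (i < K)%nat -> second_deriv_on a b (F i) (F (S i))) ->
  forall i, (i <= K)%nat -> forall x, a <= x <= b -> F i x = 0.
Proof.
  intros Hab H0 Hs i. induction i as [|i IH]; intros Hi; auto.
  apply (second_deriv_on_vanishing a b (F i) (F (S i)) Hab); [apply Hs | apply IH]; lia.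
Qed.

Lemma second_deriv_on_eq_fun a b f1 f2 g :
  (forall x, f1 x = f2 x) -> second_deriv_on a b f1 g -> second_deriv_on a b f2 g.
Proof. intros H. replace f2 with f1; auto. apply functional_extensionality; auto. Qed.

Lemma second_deriv_on_eq a b f g1 g2 :
  (forall x, a <= x <= b -> g1 x = g2 x) -> second_deriv_on a b f g1 -> second_deriv_on a b f g2.
Proof.
  intros H [f' Hf']. exists f'. intros x Hx. rewrite <- H by exact Hx. auto.
Qed.

Lemma second_deriv_on_plus a b f1 g1 f2 g2 :
  second_deriv_on a b f1 g1 -> second_deriv_on a b f2 g2 ->
  second_deriv_on a b (fun x => f1 x + f2 x) (fun x => g1 x + g2 x).
Proof.
  intros [f1' H1] [f2' H2]. exists (fun x => f1' x + f2' x). intros x Hx.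
  destruct (H1 x Hx), (H2 x Hx). split; apply derivable_pt_lim_plus; auto.
Qed.

Lemma second_deriv_on_minus a b f1 g1 f2 g2 :
  second_deriv_on a b f1 g1 -> second_deriv_on a b f2 g2 ->
  second_deriv_on a b (fun x => f1 x - f2 x) (fun x => g1 x - g2 x).
Proof.
  intros [f1' H1] [f2' H2]. exists (fun x => f1' x - f2' x). intros x Hx.
  destruct (H1 x Hx), (H2 x Hx). split; apply derivable_pt_lim_minus; auto.
Qed.

Lemma second_deriv_on_scal a b c f g : second_deriv_on a b f g ->
  second_deriv_on a b (fun x => c * f x) (fun x => c * g x).
Proof.
  intros [f' Hf]. exists (fun x => c * f' x). intros x Hx.
  destruct (Hf x Hx). split; apply derivable_pt_lim_scal; auto.
Qed.

Lemma second_deriv_on_sum a b (F G : nat -> R -> R) p :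
  (forall l, (l <= p)%nat -> second_deriv_on a b (F l) (G l)) ->
  second_deriv_on a b (fun x => sum_f_R0 (fun l => F l x) p) (fun x => sum_f_R0 (fun l => G l x) p).
Proof.
  induction p as [|p IH]; intros H; simpl.
  - apply H; lia.
  - apply second_deriv_on_plus; [apply IH; intros; apply H | apply H]; lia.
Qed.

Lemma derivable_pt_lim_affine_comp f c d x l : derivable_pt_lim f (c * x + d) l ->
  derivable_pt_lim (fun t => f (c * t + d)) x (c * l).
Proof.
  intros H. apply is_derive_Reals. apply is_derive_Reals in H.
  apply (is_derive_comp f (fun t => c * t + d) x l c); auto.
  auto_derive; auto; ring.
Qed.

Lemma second_deriv_on_affine_comp a b a' b' f g c d : second_deriv_on a' b' f g ->
  (forall x, a <= x <= b -> a' <= c * x + d <= b') ->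
  second_deriv_on a b (fun x => f (c * x + d)) (fun x => c ^ 2 * g (c * x + d)).
Proof.
  intros [f' Hf] Hin.
  exists (fun x => c * f' (c * x + d)). intros x Hx.
  destruct (Hf _ (Hin x Hx)) as [H1 H2]. split.
  - apply derivable_pt_lim_affine_comp; auto.
  - replace (c ^ 2 * g (c * x + d)) with (c * (c * g (c * x + d))) by ring.
    apply derivable_pt_lim_scal, derivable_pt_lim_affine_comp; auto.
Qed.

Lemma second_deriv_on_affine_comp_everywhere a b f g c d :
  (forall a' b', second_deriv_on a' b' f g) ->
  second_deriv_on a b (fun x => f (c * x + d)) (fun x => c ^ 2 * g (c * x + d)).
Proof.
  intros Hf. set (r := Rabs c * (Rabs a + Rabs b) + Rabs d).
  apply (second_deriv_on_affine_comp a b (- r) r f g c d (Hf _ _)).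
  intros x Hx. apply Rabs_le_between.
  assert (Rabs x <= Rabs a + Rabs b) by (unfold Rabs; repeat destruct Rcase_abs; lra).
  eapply Rle_trans; [apply Rabs_triang |]. rewrite Rabs_mult.
  pose proof (Rabs_pos c). unfold r. nra.
Qed.

Lemma nonneg_of_concave a b f g : a < b -> second_deriv_on a b f g ->
  (forall x, a <= x <= b -> g x <= 0) -> f a = 0 -> f b = 0 ->
  forall t, a <= t <= b -> 0 <= f t.
Proof.
  intros Hab [f' Hf] Hg Ha Hb t Ht.
  destruct (Rle_lt_dec 0 (f t)) as [|Hneg]; auto. exfalso.
  assert (Hta : a < t) by (destruct (Req_dec t a); [subst; lra | lra]).
  assert (Htb : t < b) by (destruct (Req_dec t b); [subst; lra | lra]).
  destruct (MVT_cor2 f f' a t Hta) as (c1 & E1 & H1). { intros; apply Hf; lra. }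
  destruct (MVT_cor2 f f' t b Htb) as (c2 & E2 & H2). { intros; apply Hf; lra. }
  destruct (MVT_cor2 f' g c1 c2) as (c3 & E3 & H3); [lra | intros; apply Hf; lra |].
  assert (f' c1 < 0) by nra. assert (0 < f' c2) by nra.
  assert (g c3 <= 0) by (apply Hg; lra). nra.
Qed.

(* [Lidstone_d2 Lam l i] is the [2i]-th derivative of [Lam l]. *)
Definition Lidstone_d2 (Lam : nat -> R -> R) (l i : nat) (t : R) : R :=
  if (i <=? l)%nat then Lam (l - i)%nat t else 0.

Lemma Lidstone_d2_0 Lam l t : Lidstone_d2 Lam l 0 t = Lam l t.
Proof. unfold Lidstone_d2. simpl. rewrite Nat.sub_0_r. reflexivity. Qed.

Lemma Lidstone_d2_second_deriv Lam a b l i : Lidstone_family Lam ->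
  second_deriv_on a b (Lidstone_d2 Lam l i) (Lidstone_d2 Lam l (S i)).
Proof.
  intros [H0 HS]. unfold Lidstone_d2.
  destruct (Nat.leb_spec i l), (Nat.leb_spec (S i) l); try lia.
  - replace (l - i)%nat with (S (l - S i)) by lia.
    destruct (HS (l - S i)%nat) as [[f' Hf] _]. exists f'. intros x _. apply Hf.
  - replace (l - i)%nat with 0%nat by lia.
    replace (Lam 0%nat) with (fun t : R => t) by (apply functional_extensionality; auto).
    exists (fun _ => 1). intros x _. split.
    + apply derivable_pt_lim_id.
    + apply derivable_pt_lim_const.
  - exists (fun _ => 0). intros x _. split; apply derivable_pt_lim_const.
Qed.

Lemma PI_le_16_5 : PI <= 16 / 5.
Proof.
  destruct (Rle_lt_dec PI (16 / 5)) as [|H]; auto. exfalso.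
  pose proof (SIN (16 / 5) ltac:(lra) ltac:(lra)) as [_ Hub].
  pose proof (sin_gt_0 (16 / 5) ltac:(lra) H).
  unfold sin_ub, sin_approx in Hub. cbn [sum_f_R0] in Hub. unfold sin_term in Hub.
  cbn [Nat.mul Nat.add] in Hub.
  rewrite !fact_simpl, !mult_INR in Hub. cbn [Factorial.fact INR pow] in Hub.
  lra.
Qed.

Lemma PI_gt_3 : 3 < PI.
Proof. pose proof PI2_3_2. lra. Qed.

Lemma sin_ge_cubic a : 0 <= a <= PI -> a - a ^ 3 / 6 <= sin a.
Proof.
  intros Ha. pose proof (SIN a (proj1 Ha) (proj2 Ha)) as [Hlb _]. pose proof PI_le_16_5.
  unfold sin_lb, sin_approx in Hlb. cbn [sum_f_R0] in Hlb. unfold sin_term in Hlb.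
  cbn [Nat.mul Nat.add] in Hlb.
  rewrite !fact_simpl, !mult_INR in Hlb. cbn [Factorial.fact INR pow] in Hlb.
  assert (Hsq : a * a <= 11) by nra.
  assert (0 <= a ^ 5 * (42 - a * a)) by (apply Rmult_le_pos; [apply pow_le |]; lra).
  simpl in *. nra.
Qed.

Lemma Lidstone_1_eq Lam : Lidstone_family Lam ->
  forall t, 0 <= t <= 1 -> Lam 1%nat t = (t ^ 3 - t) / 6.
Proof.
  intros [H0 HS] t Ht.
  destruct (HS 0%nat) as [[f' Hf] [Z0 Z1]].
  set (e := fun t => Lam 1%nat t - (t ^ 3 - t) / 6).
  assert (He : second_deriv_on 0 1 e (fun _ => 0)).
  { apply (second_deriv_on_eq _ _ _ (fun t => Lam 0%nat t - t)); [intros; cbv beta; rewrite H0; ring |].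
    apply second_deriv_on_minus.
    - exists f'; intros; apply Hf.
    - exists (fun t => (3 * t ^ 2 - 1) / 6). intros x _.
      split; apply is_derive_Reals; auto_derive; auto; field. }
  assert (Hme : second_deriv_on 0 1 (fun t => -1 * e t) (fun _ => -1 * 0))
    by (apply second_deriv_on_scal; exact He).
  assert (e 0 = 0 /\ e 1 = 0) as [E0 E1] by (unfold e; rewrite Z0, Z1; split; field).
  pose proof (nonneg_of_concave 0 1 _ _ ltac:(lra) He ltac:(intros; lra) E0 E1 t Ht).
  pose proof (nonneg_of_concave 0 1 _ _ ltac:(lra) Hme ltac:(intros; lra)
                ltac:(cbv beta; rewrite E0; ring) ltac:(cbv beta; rewrite E1; ring) t Ht).
  unfold e in *. lra.
Qed.

Lemma cubic_le_sin_PI t : 0 <= t <= 1 -> PI * t * (1 - t ^ 2) <= 2 * sin (PI * t).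
Proof.
  intros Ht. pose proof PI_le_16_5. pose proof PI_gt_3.
  assert (HPI2 : PI * PI <= 11) by nra.
  destruct (Rle_dec t (1 / 2)).
  - pose proof (sin_ge_cubic (PI * t) ltac:(split; nra)).
    assert (0 <= 1 - (PI ^ 2 / 3 - 1) * t ^ 2) by (simpl; nra).
    assert (0 <= PI * t * (1 - (PI ^ 2 / 3 - 1) * t ^ 2)) by (apply Rmult_le_pos; nra).
    simpl in *. nra.
  - set (u := 1 - t).
    replace (PI * t) with (PI - PI * u) by (unfold u; ring). rewrite sin_PI_x.
    replace t with (1 - u) by (unfold u; ring).
    assert (0 <= u <= 1 / 2) by (unfold u; lra).
    pose proof (sin_ge_cubic (PI * u) ltac:(split; nra)).
    assert (0 <= 3 - u * (1 + PI ^ 2 / 3)) by (simpl; nra).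
    assert (0 <= PI * u * (3 - u * (1 + PI ^ 2 / 3))) by (apply Rmult_le_pos; nra).
    simpl in *. nra.
Qed.

Lemma second_deriv_on_sin_PI a b K :
  second_deriv_on a b (fun t => K * sin (PI * t)) (fun t => - (K * PI ^ 2) * sin (PI * t)).
Proof.
  exists (fun t => K * PI * cos (PI * t)). intros x _.
  split; apply is_derive_Reals; auto_derive; auto; ring.
Qed.

(* Induction on [j] by the maximum principle, comparing with the sine eigenfunction. *)
Lemma Lidstone_sin_bound Lam : Lidstone_family Lam -> forall j t, 0 <= t <= 1 ->
  Rabs (Lam (S j) t) <= (/ PI) ^ (2 * j) / (3 * PI) * sin (PI * t).
Proof.
  intros HL. pose proof HL as [_ HS]. pose proof PI_gt_3.
  induction j as [|j IH]; intros t Ht.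
  - rewrite (Lidstone_1_eq Lam HL t Ht).
    pose proof (cubic_le_sin_PI t Ht).
    rewrite Rabs_left1 by (simpl; nra).
    apply (Rmult_le_reg_l (6 * PI)); [lra |].
    replace (6 * PI * (- ((t ^ 3 - t) / 6))) with (PI * t * (1 - t ^ 2)) by field.
    replace (6 * PI * ((/ PI) ^ (2 * 0) / (3 * PI) * sin (PI * t)))
      with (2 * sin (PI * t)) by (simpl; field; lra).
    assumption.
  - set (K := (/ PI) ^ (2 * S j) / (3 * PI)).
    assert (HK : - (K * PI ^ 2) = - ((/ PI) ^ (2 * j) / (3 * PI))).
    { unfold K. replace (2 * S j)%nat with (2 * j + 2)%nat by lia.
      rewrite pow_add. field. lra. }
    destruct (HS (S j)) as [[f' Hf] [Z0 Z1]].
    assert (HLam : second_deriv_on 0 1 (Lam (S (S j))) (Lam (S j)))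
      by (exists f'; intros; apply Hf).
    pose proof (second_deriv_on_sin_PI 0 1 K) as Hsin.
    assert (Hs : sin (PI * 0) = 0 /\ sin (PI * 1) = 0)
      by (rewrite Rmult_0_r, Rmult_1_r; split; [apply sin_0 | apply sin_PI]).
    destruct Hs as [S0 S1].
    assert (HIH : forall x, 0 <= x <= 1 ->
      - (K * PI ^ 2) * sin (PI * x) - Lam (S j) x <= 0 /\
      - (K * PI ^ 2) * sin (PI * x) + Lam (S j) x <= 0).
    { intros x Hx. rewrite HK. specialize (IH x Hx). apply Rabs_le_between in IH. lra. }
    pose proof (nonneg_of_concave 0 1 _ _ ltac:(lra) (second_deriv_on_minus _ _ _ _ _ _ Hsin HLam)
                  ltac:(apply HIH) ltac:(cbv beta; rewrite S0, Z0; ring) ltac:(cbv beta; rewrite S1, Z1; ring) t Ht).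
    pose proof (nonneg_of_concave 0 1 _ _ ltac:(lra) (second_deriv_on_plus _ _ _ _ _ _ Hsin HLam)
                  ltac:(apply HIH) ltac:(cbv beta; rewrite S0, Z0; ring) ltac:(cbv beta; rewrite S1, Z1; ring) t Ht).
    cbv beta in *. apply Rabs_le_between. fold K. lra.
Qed.

Lemma Lidstone_pair_bound Lam : Lidstone_family Lam -> forall j t, 0 <= t <= 1 ->
  Rabs (Lam j t) + Rabs (Lam j (1 - t)) <= 2 * PI / 3 * (/ PI) ^ (2 * j).
Proof.
  intros HL j t Ht. pose proof PI_gt_3. pose proof HL as [H0 _].
  destruct j as [|j].
  - rewrite !H0. simpl. rewrite !Rabs_right by lra. lra.
  - pose proof (Lidstone_sin_bound Lam HL j t Ht).
    pose proof (Lidstone_sin_bound Lam HL j (1 - t) ltac:(lra)).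
    pose proof (SIN_bound (PI * t)) as [_ S1]. pose proof (SIN_bound (PI * (1 - t))) as [_ S2].
    assert (0 < (/ PI) ^ (2 * j) / (3 * PI)).
    { apply Rdiv_lt_0_compat; [apply pow_lt, Rinv_0_lt_compat |]; lra. }
    replace (2 * PI / 3 * (/ PI) ^ (2 * S j)) with (2 * ((/ PI) ^ (2 * j) / (3 * PI))).
    + nra.
    + replace (2 * S j)%nat with (2 * j + 2)%nat by lia. rewrite pow_add. field. lra.
Qed.

Lemma Lidstone_pair_comb_bound Lam c d rho j t : Lidstone_family Lam -> 0 <= t <= 1 ->
  Rabs c <= rho -> Rabs d <= rho ->
  Rabs (c * Lam j (1 - t) + d * Lam j t) <= rho * (2 * PI / 3 * (/ PI) ^ (2 * j)).
Proof.
  intros HL Ht Hc Hd. pose proof (Lidstone_pair_bound Lam HL j t Ht).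
  eapply Rle_trans; [apply Rabs_triang |]. rewrite !Rabs_mult.
  pose proof (Rabs_pos (Lam j t)). pose proof (Rabs_pos (Lam j (1 - t))).
  pose proof (Rabs_pos c). pose proof (Rabs_pos d). nra.
Qed.

(* The [2i]-th derivative of the Lidstone interpolant on [a, b] of the data
   [c l] (at [a]) and [d l] (at [b]), [l <= p]. *)
Definition Lidstone_interp (Lam : nat -> R -> R) (p : nat) (c d : nat -> R) (a b : R)
  (i : nat) (t : R) : R :=
  sum_f_R0 (fun l => (c l * Lidstone_d2 Lam l i ((b - t) / (b - a))
                      + d l * Lidstone_d2 Lam l i ((t - a) / (b - a)))
                     * (b - a) ^ (2 * l) * (/ (b - a)) ^ (2 * i)) p.

Lemma Lidstone_interp_second_deriv Lam p c d a b i u v : Lidstone_family Lam -> a < b ->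
  second_deriv_on u v (Lidstone_interp Lam p c d a b i) (Lidstone_interp Lam p c d a b (S i)).
Proof.
  intros HL Hab. unfold Lidstone_interp.
  apply second_deriv_on_sum. intros l _.
  set (h := b - a). set (K := h ^ (2 * l) * (/ h) ^ (2 * i)).
  apply (second_deriv_on_eq_fun _ _ (fun t => K * (c l * Lidstone_d2 Lam l i (- / h * t + b / h)
                                               + d l * Lidstone_d2 Lam l i (/ h * t + - a / h)))).
  { intros t. unfold K, h. replace ((b - t) / (b - a)) with (- / (b - a) * t + b / (b - a))
      by (field; lra).
    replace ((t - a) / (b - a)) with (/ (b - a) * t + - a / (b - a)) by (field; lra). ring. }
  apply (second_deriv_on_eq _ _ _
    (fun t => K * (c l * ((- / h) ^ 2 * Lidstone_d2 Lam l (S i) (- / h * t + b / h))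
                   + d l * ((/ h) ^ 2 * Lidstone_d2 Lam l (S i) (/ h * t + - a / h))))).
  { intros t _. unfold K, h.
    replace ((b - t) / (b - a)) with (- / (b - a) * t + b / (b - a)) by (field; lra).
    replace ((t - a) / (b - a)) with (/ (b - a) * t + - a / (b - a)) by (field; lra).
    replace (2 * S i)%nat with (2 * i + 2)%nat by lia. rewrite pow_add. ring. }
  apply second_deriv_on_scal, second_deriv_on_plus; apply second_deriv_on_scal;
    apply second_deriv_on_affine_comp_everywhere; intros; apply Lidstone_d2_second_deriv; auto.
Qed.

Lemma sum_f_R0_shift (f : nat -> R) k m :
  sum_f_R0 (fun l => if (k <=? l)%nat then f (l - k)%nat else 0) (k + m) = sum_f_R0 f m.
Proof.
  set (G := fun l => if (k <=? l)%nat then f (l - k)%nat else 0).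
  assert (Hlow : forall j, (j < k)%nat -> sum_f_R0 G j = 0).
  { induction j as [|j IH]; intros Hj; simpl.
    - unfold G. destruct (Nat.leb_spec k 0); [lia | reflexivity].
    - rewrite IH by lia. unfold G. destruct (Nat.leb_spec k (S j)); [lia | ring]. }
  induction m as [|m IH].
  - rewrite Nat.add_0_r. destruct k as [|k]; simpl.
    + reflexivity.
    + rewrite Hlow by lia. unfold G. rewrite Nat.leb_refl, Nat.sub_diag. ring.
  - replace (k + S m)%nat with (S (k + m)) by lia. simpl. rewrite IH. unfold G.
    destruct (Nat.leb_spec k (S (k + m))); [| lia].
    replace (S (k + m) - k)%nat with (S m) by lia. reflexivity.
Qed.

Lemma Lidstone_interp_bound Lam p c d a b k rho t : Lidstone_family Lam -> a < b ->
  (k <= p)%nat -> (forall l, (l <= p)%nat -> Rabs (c l) <= rho /\ Rabs (d l) <= rho) ->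
  a <= t <= b ->
  Rabs (Lidstone_interp Lam p c d a b k t)
    <= 2 * rho * PI / 3 * sum_f_R0 (fun l => ((b - a) / PI) ^ (2 * l)) (p - k).
Proof.
  intros HL Hab Hkp Hcd Ht. pose proof PI_gt_3.
  set (s := (t - a) / (b - a)).
  assert (Hs : 0 <= s <= 1).
  { unfold s. split; [apply Rdiv_le_0_compat | apply ->Rdiv_le_1]; lra. }
  assert (Hs' : (b - t) / (b - a) = 1 - s) by (unfold s; field; lra).
  unfold Lidstone_interp. rewrite Hs'. fold s.
  eapply Rle_trans; [apply sum_f_R0_triangle |].
  rewrite scal_sum. replace p with (k + (p - k))%nat at 1 by lia.
  rewrite <- (sum_f_R0_shift _ k (p - k)).
  apply sum_Rle. intros l Hl. unfold Lidstone_d2.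
  destruct (Nat.leb_spec k l) as [Hkl | Hkl].
  - set (j := (l - k)%nat). replace l with (j + k)%nat in * by (unfold j; lia).
    replace (j + k - k)%nat with j by lia.
    assert (Hh : (b - a) ^ (2 * (j + k)) * (/ (b - a)) ^ (2 * k) = (b - a) ^ (2 * j)).
    { rewrite Nat.mul_add_distr_l, pow_add, Rmult_assoc, <- Rpow_mult_distr, Rinv_r, pow1 by lra.
      ring. }
    rewrite Rmult_assoc, Hh, Rabs_mult, (Rabs_right ((b - a) ^ (2 * j)))
      by (apply Rle_ge, pow_le; lra).
    destruct (Hcd (j + k)%nat ltac:(lia)) as [Hc Hd].
    replace (((b - a) / PI) ^ (2 * j) * (2 * rho * PI / 3))
      with (rho * (2 * PI / 3 * (/ PI) ^ (2 * j)) * (b - a) ^ (2 * j))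
      by (unfold Rdiv; rewrite Rpow_mult_distr; ring).
    apply Rmult_le_compat_r; [apply pow_le; lra |].
    apply Lidstone_pair_comb_bound; auto.
  - rewrite !Rmult_0_r, Rplus_0_r, !Rmult_0_l, Rabs_R0. lra.
Qed.

Lemma max_upto_ge f m i : (i <= m)%nat -> f i <= max_upto f m.
Proof.
  induction m as [|m IH]; intros Hi; simpl.
  - replace i with 0%nat by lia. apply Rle_refl.
  - destruct (Nat.eq_dec i (S m)) as [-> | Hne]; [apply Rmax_r |].
    eapply Rle_trans; [apply IH; lia | apply Rmax_l].
Qed.

Lemma min_upto_le f m i : (i <= m)%nat -> min_upto f m <= f i.
Proof.
  induction m as [|m IH]; intros Hi; simpl.
  - replace i with 0%nat by lia. apply Rle_refl.
  - destruct (Nat.eq_dec i (S m)) as [-> | Hne]; [apply Rmin_r |].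
    eapply Rle_trans; [apply Rmin_l | apply IH; lia].
Qed.

Lemma min_upto_pos f m : (forall i, (i <= m)%nat -> 0 < f i) -> 0 < min_upto f m.
Proof.
  induction m as [|m IH]; intros H; simpl; [apply H; lia |].
  apply Rmin_glb_lt; [apply IH; intros |]; apply H; lia.
Qed.

Lemma alpha_sup_ge N alpha n : (1 <= n <= N)%nat -> Rabs (alpha n) <= alpha_sup N alpha.
Proof.
  intros Hn. unfold alpha_sup. replace n with (S (n - 1)) at 1 by lia.
  apply (max_upto_ge (fun i => Rabs (alpha (S i)))). lia.
Qed.

Lemma mu_min_le xs N n : (1 <= n <= N)%nat -> mu_min xs N <= a_coef xs N n.
Proof.
  intros Hn. pose proof (min_upto_le (fun i => a_coef xs N (S i)) (N - 1) (n - 1) ltac:(lia)).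
  cbv beta in *. replace (S (n - 1)) with n in * by lia. assumption.
Qed.

Lemma rho_max_ge y N p l : (l <= p)%nat ->
  Rabs (y 0%nat l) <= rho_max y N p /\ Rabs (y N l) <= rho_max y N p.
Proof.
  intros Hl. pose proof (max_upto_ge (fun k => Rmax (Rabs (y 0%nat k)) (Rabs (y N k))) p l Hl).
  unfold rho_max. split; eapply Rle_trans; eauto; [apply Rmax_l | apply Rmax_r].
Qed.

Section Nodes.

Variables (xs : nat -> R) (N : nat).
Hypothesis xs_incr : forall n, (n < N)%nat -> xs n < xs (S n).

Lemma nodes_le i j : (i <= j <= N)%nat -> xs i <= xs j.
Proof.
  intros [Hij HjN]. induction j as [|j IH].
  - replace i with 0%nat by lia. apply Rle_refl.
  - destruct (Nat.eq_dec i (S j)) as [-> | Hne]; [apply Rle_refl |].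
    pose proof (xs_incr j ltac:(lia)). assert (xs i <= xs j) by (apply IH; lia). lra.
Qed.

Lemma node_step n : (1 <= n <= N)%nat -> xs (n - 1)%nat < xs n.
Proof. intros Hn. replace n with (S (n - 1)) at 2 by lia. apply xs_incr. lia. Qed.

Lemma piece_in_span n : (1 <= n <= N)%nat -> xs 0%nat <= xs (n - 1)%nat /\ xs n <= xs N.
Proof. intros Hn. split; apply nodes_le; lia. Qed.

Lemma span_pos : (1 <= N)%nat -> xs 0%nat < xs N.
Proof. intros HN. pose proof (node_step N ltac:(lia)). pose proof (piece_in_span N ltac:(lia)). lra. Qed.

Lemma a_coef_pos n : (1 <= n <= N)%nat -> 0 < a_coef xs N n.
Proof.
  intros Hn. pose proof (node_step n Hn). pose proof (span_pos ltac:(lia)).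
  apply Rdiv_lt_0_compat; lra.
Qed.

Lemma mu_min_pos : (1 <= N)%nat -> 0 < mu_min xs N.
Proof. intros HN. apply min_upto_pos. intros i Hi. apply a_coef_pos. lia. Qed.

End Nodes.

Lemma exists_piece (xs : nat -> R) N x : (1 <= N)%nat -> xs 0%nat <= x <= xs N ->
  exists n, (1 <= n <= N)%nat /\ xs (n - 1)%nat <= x <= xs n.
Proof.
  induction N as [|M IH]; intros HN Hx; [lia |].
  destruct (Nat.eq_dec M 0) as [-> | HM].
  - exists 1%nat. simpl. split; [lia | lra].
  - destruct (Rle_dec x (xs M)).
    + destruct (IH ltac:(lia) ltac:(lra)) as (n & Hn & Hxn). exists n. split; [lia | auto].
    + exists (S M). replace (S M - 1)%nat with M by lia. split; [lia | lra].
Qed.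

Lemma max_over_pieces (g : nat -> R -> R) (lo hi : nat -> R) N : (1 <= N)%nat ->
  (forall n, (1 <= n <= N)%nat ->
     lo n <= hi n /\ forall t, lo n <= t <= hi n -> continuity_pt (g n) t) ->
  exists n0 t0, (1 <= n0 <= N)%nat /\ lo n0 <= t0 <= hi n0 /\
    forall n t, (1 <= n <= N)%nat -> lo n <= t <= hi n -> g n t <= g n0 t0.
Proof.
  induction N as [|M IH]; intros HN H; [lia |].
  destruct (H (S M) ltac:(lia)) as [Hlh Hc].
  destruct (continuity_ab_maj (g (S M)) (lo (S M)) (hi (S M)) Hlh Hc) as (t1 & Ht1 & Ht1b).
  destruct (Nat.eq_dec M 0) as [-> | HM].
  - exists 1%nat, t1. split; [lia | split; [exact Ht1b |]].
    intros n t Hn Ht. replace n with 1%nat in * by lia. auto.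
  - destruct (IH ltac:(lia) ltac:(intros; apply H; lia)) as (n0 & t0 & Hn0 & Ht0 & Hmax).
    destruct (Rle_dec (g n0 t0) (g (S M) t1)) as [Hle | Hgt].
    + exists (S M), t1. split; [lia | split; [exact Ht1b |]]. intros n t Hn Ht.
      destruct (Nat.eq_dec n (S M)) as [-> | Hne]; auto.
      eapply Rle_trans; [apply Hmax; auto; lia | auto].
    + exists n0, t0. split; [lia | split; [exact Ht0 |]]. intros n t Hn Ht.
      destruct (Nat.eq_dec n (S M)) as [-> | Hne]; [specialize (Ht1 t Ht); lra |].
      apply Hmax; auto; lia.
Qed.

Lemma deriv_family_continuity f D m a b : deriv_family f D m a b ->
  forall j x, (j <= m)%nat -> a <= x <= b -> continuity_pt (D j) x.
Proof.
  intros [_ [Hd Hc]] j x Hj Hx.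
  destruct (Nat.eq_dec j m) as [-> | Hne]; auto.
  apply derivable_continuous_pt. exists (D (S j) x). apply Hd; auto; lia.
Qed.

Lemma deriv_family_second_deriv f D m a b : deriv_family f D m a b ->
  forall i, (2 * i + 2 <= m)%nat -> second_deriv_on a b (D (2 * i)%nat) (D (2 * S i)%nat).
Proof.
  intros [_ [Hd _]] i Hi. exists (D (S (2 * i))). intros x Hx. split.
  - apply Hd; auto; lia.
  - replace (2 * S i)%nat with (S (S (2 * i))) by lia. apply Hd; auto; lia.
Qed.

Section AffineMaps.

Variables (xs : nat -> R) (N n : nat).
Hypothesis span_pos : xs 0%nat < xs N.

Lemma L_map_sub_left x : L_map xs N n x - xs (n - 1)%nat
  = (xs n - xs (n - 1)%nat) * ((x - xs 0%nat) / (xs N - xs 0%nat)).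
Proof. unfold L_map, a_coef. field. lra. Qed.

Lemma L_map_sub_right x : xs n - L_map xs N n x
  = (xs n - xs (n - 1)%nat) * ((xs N - x) / (xs N - xs 0%nat)).
Proof. unfold L_map, a_coef. field. lra. Qed.

Hypothesis piece_pos : xs (n - 1)%nat < xs n.

Lemma L_map_in_piece x : xs 0%nat <= x <= xs N -> xs (n - 1)%nat <= L_map xs N n x <= xs n.
Proof.
  intros Hx. pose proof (L_map_sub_left x). pose proof (L_map_sub_right x).
  assert (0 <= (x - xs 0%nat) / (xs N - xs 0%nat)) by (apply Rdiv_le_0_compat; lra).
  assert (0 <= (xs N - x) / (xs N - xs 0%nat)) by (apply Rdiv_le_0_compat; lra).
  split; nra.
Qed.

Lemma L_map_onto t : xs (n - 1)%nat <= t <= xs n ->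
  exists x, xs 0%nat <= x <= xs N /\ L_map xs N n x = t.
Proof.
  intros Ht. set (s := (t - xs (n - 1)%nat) / (xs n - xs (n - 1)%nat)).
  assert (0 <= s <= 1) by (unfold s; split; [apply Rdiv_le_0_compat | apply ->Rdiv_le_1]; lra).
  exists (xs 0%nat + (xs N - xs 0%nat) * s). split; [nra |].
  unfold L_map, a_coef, s. field. lra.
Qed.

Lemma q_fun_eq Lam y alpha p x : q_fun Lam xs y alpha N p n x =
  Lidstone_interp Lam p (y (n - 1)%nat) (y n) (xs (n - 1)%nat) (xs n) 0 (L_map xs N n x)
  - alpha n * Lidstone_interp Lam p (y 0%nat) (y N) (xs 0%nat) (xs N) 0 x.
Proof.
  unfold Lidstone_interp. rewrite scal_sum, <- minus_sum. unfold q_fun.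
  apply sum_eq. intros l _. rewrite !Lidstone_d2_0.
  assert (E1 : (xs n - L_map xs N n x) / (xs n - xs (n - 1)%nat) = (xs N - x) / (xs N - xs 0%nat))
    by (rewrite L_map_sub_right; field; lra).
  assert (E2 : (L_map xs N n x - xs (n - 1)%nat) / (xs n - xs (n - 1)%nat)
               = (x - xs 0%nat) / (xs N - xs 0%nat))
    by (rewrite L_map_sub_left; field; lra).
  assert (E3 : (xs n - xs (n - 1)%nat) ^ (2 * l)
               = a_coef xs N n ^ (2 * l) * (xs N - xs 0%nat) ^ (2 * l))
    by (rewrite <- Rpow_mult_distr; unfold a_coef; f_equal; field; lra).
  rewrite E1, E2, E3. simpl (2 * 0)%nat. ring.
Qed.

End AffineMaps.

Lemma phi_piece_eq Lam xs y p n t : phi_piece Lam xs y p n t =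
  Lidstone_interp Lam p (y (n - 1)%nat) (y n) (xs (n - 1)%nat) (xs n) 0 t.
Proof.
  unfold phi_piece, Lidstone_interp. apply sum_eq. intros l _.
  rewrite !Lidstone_d2_0. simpl (2 * 0)%nat. ring.
Qed.

Lemma phi_piece_derivs Lam xs y p n (Dphi : nat -> R -> R) k t :
  Lidstone_family Lam -> xs (n - 1)%nat < xs n ->
  deriv_family (phi_piece Lam xs y p n) Dphi (2 * p) (xs (n - 1)%nat) (xs n) ->
  (k <= p)%nat -> xs (n - 1)%nat <= t <= xs n ->
  Dphi (2 * k)%nat t = Lidstone_interp Lam p (y (n - 1)%nat) (y n) (xs (n - 1)%nat) (xs n) k t.
Proof.
  intros HL Hn Hphi Hk Ht.
  set (e := fun i t => Dphi (2 * i)%nat t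
                       - Lidstone_interp Lam p (y (n - 1)%nat) (y n) (xs (n - 1)%nat) (xs n) i t).
  enough (e k t = 0) by (unfold e in *; lra).
  apply (second_deriv_on_chain_vanishing _ _ e p Hn); auto.
  - intros s Hs. unfold e. destruct Hphi as [HD0 _].
    simpl (2 * 0)%nat. rewrite (HD0 s Hs), phi_piece_eq. ring.
  - intros i Hi. apply second_deriv_on_minus.
    + apply (deriv_family_second_deriv _ _ _ _ _ Hphi). lia.
    + apply Lidstone_interp_second_deriv; auto.
Qed.

Lemma le_of_contraction E A m C : 0 <= E -> 0 <= A -> A < m ->
  m * E <= A * (E + C) -> E <= A / (m - A) * C.
Proof.
  intros HE HA Hm H.
  replace (A / (m - A) * C) with (A * C / (m - A)) by (field; lra).
  apply Rle_div_r; lra.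
Qed.

Section LidstoneFIF.

Variables (p N : nat) (xs : nat -> R) (y : nat -> nat -> R) (alpha : nat -> R)
  (Lam : nat -> R -> R) (ell : R -> R) (Dell : nat -> R -> R) (Dphi : nat -> nat -> R -> R).

Hypothesis N_pos : (1 <= N)%nat.
Hypothesis xs_incr : forall n, (n < N)%nat -> xs n < xs (S n).
Hypothesis Lam_Lidstone : Lidstone_family Lam.
Hypothesis ell_derivs : deriv_family ell Dell (2 * p) (xs 0%nat) (xs N).
Hypothesis ell_fe : forall n x, (1 <= n <= N)%nat -> xs 0%nat <= x <= xs N ->
  ell (L_map xs N n x) = alpha n * ell x + q_fun Lam xs y alpha N p n x.
Hypothesis phi_derivs : forall n, (1 <= n <= N)%nat ->
  deriv_family (phi_piece Lam xs y p n) (Dphi n) (2 * p) (xs (n - 1)%nat) (xs n).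

Let phi_d2 (n i : nat) :=
  Lidstone_interp Lam p (y (n - 1)%nat) (y n) (xs (n - 1)%nat) (xs n) i.
Let ends_d2 (i : nat) := Lidstone_interp Lam p (y 0%nat) (y N) (xs 0%nat) (xs N) i.

Lemma ell_d2_functional_eq n k x : (1 <= n <= N)%nat -> (k <= p)%nat ->
  xs 0%nat <= x <= xs N ->
  a_coef xs N n ^ (2 * k) * (Dell (2 * k)%nat (L_map xs N n x) - phi_d2 n k (L_map xs N n x))
  = alpha n * (Dell (2 * k)%nat x - ends_d2 k x).
Proof.
  intros Hn Hk Hx.
  pose proof (span_pos xs N xs_incr N_pos) as Hspan.
  pose proof (node_step xs N xs_incr n Hn) as Hpiece.
  pose proof (piece_in_span xs N xs_incr n Hn).
  assert (HL : forall x, xs 0%nat <= x <= xs N -> xs 0%nat <= L_map xs N n x <= xs N).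
  { intros z Hz. pose proof (L_map_in_piece xs N n Hspan Hpiece z Hz). lra. }
  set (a := a_coef xs N n). set (b := (xs N * xs (n - 1)%nat - xs 0%nat * xs n) / (xs N - xs 0%nat)).
  set (e := fun i x => a ^ (2 * i) * Dell (2 * i)%nat (a * x + b) - alpha n * Dell (2 * i)%nat x
                       - (a ^ (2 * i) * phi_d2 n i (a * x + b) - alpha n * ends_d2 i x)).
  enough (e k x = 0) by (unfold e, L_map in *; fold a b; lra).
  apply (second_deriv_on_chain_vanishing _ _ e p Hspan); auto.
  - intros z Hz. unfold e. destruct ell_derivs as [HD0 _]. simpl (2 * 0)%nat.
    change (a * z + b) with (L_map xs N n z).
    rewrite (HD0 z Hz), (HD0 _ (HL z Hz)), ell_fe, q_fun_eq by auto. unfold phi_d2, ends_d2. ring.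
  - intros i Hi. unfold e.
    apply (second_deriv_on_eq _ _ _ (fun x =>
        a ^ (2 * i) * (a ^ 2 * Dell (2 * S i)%nat (a * x + b)) - alpha n * Dell (2 * S i)%nat x
        - (a ^ (2 * i) * (a ^ 2 * phi_d2 n (S i) (a * x + b)) - alpha n * ends_d2 (S i) x))).
    { intros z _. replace (2 * S i)%nat with (2 * i + 2)%nat by lia. rewrite pow_add. ring. }
    assert (HDell : second_deriv_on (xs 0%nat) (xs N) (Dell (2 * i)%nat) (Dell (2 * S i)%nat))
      by (apply (deriv_family_second_deriv _ _ _ _ _ ell_derivs); lia).
    repeat apply second_deriv_on_minus; apply second_deriv_on_scal; auto.
    + apply (second_deriv_on_affine_comp _ _ (xs 0%nat) (xs N)); auto.
    + apply second_deriv_on_affine_comp_everywhere. intros.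
      apply Lidstone_interp_second_deriv; auto.
    + apply Lidstone_interp_second_deriv; auto.
Qed.

Lemma ends_d2_bound k z : (k <= p)%nat -> xs 0%nat <= z <= xs N ->
  Rabs (ends_d2 k z) <= M_const xs y N p k.
Proof.
  intros Hk Hz. apply Lidstone_interp_bound; auto.
  - apply (span_pos xs N xs_incr N_pos).
  - intros l Hl. apply rho_max_ge. exact Hl.
Qed.

Lemma error_continuity k n t : (k <= p)%nat -> (1 <= n <= N)%nat ->
  xs (n - 1)%nat <= t <= xs n ->
  continuity_pt (fun s => Rabs (Dell (2 * k)%nat s - Dphi n (2 * k)%nat s)) t.
Proof.
  intros Hk Hn Ht. pose proof (piece_in_span xs N xs_incr n Hn).
  apply (continuity_pt_comp (fun s => Dell (2 * k)%nat s - Dphi n (2 * k)%nat s) Rabs);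
    [apply continuity_pt_minus | apply Rcontinuity_abs].
  - apply (deriv_family_continuity _ _ _ _ _ ell_derivs); [lia | lra].
  - apply (deriv_family_continuity _ _ _ _ _ (phi_derivs n Hn)); [lia | lra].
Qed.

Lemma error_contraction k B n0 t0 : (k <= p)%nat ->
  (forall n t, (1 <= n <= N)%nat -> xs (n - 1)%nat <= t <= xs n ->
     Rabs (Dphi n (2 * k)%nat t) <= B) ->
  (1 <= n0 <= N)%nat -> xs (n0 - 1)%nat <= t0 <= xs n0 ->
  (forall n t, (1 <= n <= N)%nat -> xs (n - 1)%nat <= t <= xs n ->
     Rabs (Dell (2 * k)%nat t - Dphi n (2 * k)%nat t)
       <= Rabs (Dell (2 * k)%nat t0 - Dphi n0 (2 * k)%nat t0)) ->
  mu_min xs N ^ (2 * k) * Rabs (Dell (2 * k)%nat t0 - Dphi n0 (2 * k)%nat t0)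
    <= alpha_sup N alpha
       * (Rabs (Dell (2 * k)%nat t0 - Dphi n0 (2 * k)%nat t0) + (B + M_const xs y N p k)).
Proof.
  intros Hk HB Hn0 Ht0 Hmax.
  set (E := Rabs (Dell (2 * k)%nat t0 - Dphi n0 (2 * k)%nat t0)).
  set (M := M_const xs y N p k).
  pose proof (span_pos xs N xs_incr N_pos) as Hspan.
  pose proof (node_step xs N xs_incr n0 Hn0) as Hpiece.
  destruct (L_map_onto xs N n0 Hspan Hpiece t0 Ht0) as (xi & Hxi & HLxi).
  pose proof (ell_d2_functional_eq n0 k xi Hn0 Hk Hxi) as Hfe.
  unfold phi_d2 in Hfe. rewrite HLxi, <- (phi_piece_derivs Lam xs y p n0 (Dphi n0) k t0) in Hfe by auto.
  assert (Hends : Rabs (Dell (2 * k)%nat xi - ends_d2 k xi) <= E + (B + M)).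
  { destruct (exists_piece xs N xi N_pos Hxi) as (m & Hm & Hxm).
    pose proof (Hmax m xi Hm Hxm). pose proof (HB m xi Hm Hxm). pose proof (ends_d2_bound k xi Hk Hxi).
    assert (Rabs (Dell (2 * k)%nat xi - ends_d2 k xi)
            <= Rabs (Dell (2 * k)%nat xi - Dphi m (2 * k)%nat xi) + Rabs (Dphi m (2 * k)%nat xi)
               + Rabs (ends_d2 k xi)) by (unfold Rabs; repeat destruct Rcase_abs; lra).
    unfold E, M. lra. }
  assert (Hscale : a_coef xs N n0 ^ (2 * k) * E
                   = Rabs (alpha n0) * Rabs (Dell (2 * k)%nat xi - ends_d2 k xi)).
  { apply (f_equal Rabs) in Hfe. rewrite !Rabs_mult, Rabs_right in Hfe; [exact Hfe |].
    apply Rle_ge, pow_le, Rlt_le, (a_coef_pos xs N xs_incr n0 Hn0). }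
  assert (HE : 0 <= E + (B + M)) by (eapply Rle_trans; [apply Rabs_pos | exact Hends]).
  pose proof (mu_min_pos xs N xs_incr N_pos).
  pose proof (mu_min_le xs N n0 Hn0). pose proof (alpha_sup_ge N alpha n0 Hn0).
  apply (Rle_trans _ (a_coef xs N n0 ^ (2 * k) * E)).
  { apply Rmult_le_compat_r; [apply Rabs_pos | apply pow_incr; lra]. }
  rewrite Hscale. apply Rmult_le_compat; auto using Rabs_pos.
Qed.

End LidstoneFIF.

Theorem corollary4p2
  (p N : nat) (xs : nat -> R) (y : nat -> nat -> R) (alpha : nat -> R)
  (Lam : nat -> R -> R) (ell : R -> R) (Dell : nat -> R -> R)
  (Dphi : nat -> nat -> R -> R) :
  (1 <= N)%nat ->
  (forall n : nat, (n < N)%nat -> xs n < xs (S n)) ->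
  in_Theta xs N p alpha ->
  Lidstone_family Lam ->
  (* ell is C^{2p}[x_0,x_N] with derivatives Dell, and is the Lidstone FIF *)
  deriv_family ell Dell (2 * p) (xs 0%nat) (xs N) ->
  (forall (n : nat) (x : R), (1 <= n <= N)%nat -> xs 0%nat <= x <= xs N ->
     ell (L_map xs N n x) = alpha n * ell x + q_fun Lam xs y alpha N p n x) ->
  (* Dphi n j = j-th derivative of phi on the piece [x_{n-1}, x_n] *)
  (forall n : nat, (1 <= n <= N)%nat ->
     deriv_family (phi_piece Lam xs y p n) (Dphi n) (2 * p)
                  (xs (n - 1)%nat) (xs n)) ->
  forall k : nat, (1 <= k <= p)%nat ->
  alpha_sup N alpha < mu_min xs N ^ (2 * k) ->
  (* B is any bound for ||phi^{(2k)}||_inf (e.g. the norm itself) *)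
  forall B : R,
  (forall (n : nat) (x : R), (1 <= n <= N)%nat -> xs (n - 1)%nat <= x <= xs n ->
     Rabs (Dphi n (2 * k)%nat x) <= B) ->
  forall (n : nat) (x : R), (1 <= n <= N)%nat -> xs (n - 1)%nat <= x <= xs n ->
    Rabs (Dell (2 * k)%nat x - Dphi n (2 * k)%nat x)
      <= alpha_sup N alpha / (mu_min xs N ^ (2 * k) - alpha_sup N alpha)
         * (B + M_const xs y N p k).
Proof.
  (* [in_Theta] only serves to make [ell] exist; here [ell] is given. *)
  intros HN Hinc _ HL Hell Hfe Hphi k Hk Hmu B HB n x Hn Hx.
  set (err := fun m t => Rabs (Dell (2 * k)%nat t - Dphi m (2 * k)%nat t)).
  destruct (max_over_pieces err (fun m => xs (m - 1)%nat) xs N HN) as (n0 & t0 & Hn0 & Ht0 & Hmax).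
  { intros m Hm. split; [apply Rlt_le, (node_step xs N Hinc m Hm) |].
    intros t Ht. eapply error_continuity; eauto; lia. }
  apply (Rle_trans _ (err n0 t0)); [exact (Hmax n x Hn Hx) |].
  apply le_of_contraction; [apply Rabs_pos | | exact Hmu |].
  - eapply Rle_trans; [apply Rabs_pos | apply (alpha_sup_ge N alpha 1%nat); lia].
  - apply (error_contraction p N xs y alpha Lam ell Dell Dphi); auto; lia.
Qed.
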